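(* Let $(X,d)$ be an $F$-space whose metric $d$ is non-decreasing, and let $\{A_n\}$ be an approximation scheme in $X$. Then the following are equivalent: (i) $\{A_n\}$ fails Shapiro's theorem on $X$, i.e. there exists a sequence $\{\varepsilon_n\}\searrow 0$ such that for every $x\in X$ there is a constant $C(x)>0$ with $E(x,A_n)\le C(x)\varepsilon_n$ for all $n\in\mathbb{N}$; (ii) there exists $r_0>0$ such that $\{A_n\}$ fails Shapiro's theorem uniformly on the ball $B(0,r_0)$, i.e. there exists $\{\varepsilon_n\}\searrow 0$ with $E(x,A_n)\le\varepsilon_n$ for all $n\in\mathbb{N}$ and all $x\in B(0,r_0)$. Consequently, $\{A_n\}$ satisfies Shapiro's theorem on $X$ (i.e. for every $\{\varepsilon_n\}\searrow0$ there exists $x\in X$ with $E(x,A_n)\neq\mathbf{O}(\varepsilon_n)$) if and only if $\inf_{n\in\mathbb{N}}E(B(0,r),A_n)>0$ for all $r>0$.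
   Context: An $F$-space is a vector space $X$ (real or complex) with a translation-invariant metric $d$ making it a complete topological vector space. The metric $d$ is non-decreasing if $d(\alpha x,0)\le d(x,0)$ whenever $0\le\alpha\le1$ and $x\in X$. An approximation scheme in $X$ is a chain $A_0\subsetneq A_1\subsetneq\cdots\subsetneq X$ of subsets (all inclusions strict) such that: (A1) there is $K:\mathbb{N}\to\mathbb{N}$ with $K(n)\ge n$ and $A_n+A_n\subseteq A_{K(n)}$ for all $n$; (A2) $\lambda A_n\subseteq A_n$ for all $n$ and all scalars $\lambda$; (A3) $\bigcup_n A_n$ is dense in $X$. For $x\in X$ and $A\subseteq X$, $E(x,A)=\inf_{a\in A}d(x,a)$; for $B\subseteq X$, $E(B,A)=\sup_{b\in B}E(b,A)$. $B(x,r)=\{y\in X:d(x,y)\le r\}$ is the closed ball. The notation $\{\varepsilon_n\}\searrow0$ means $\varepsilon_0\ge\varepsilon_1\ge\cdots\ge0$ and $\lim_n\varepsilon_n=0$. *)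

From HB Require Import structures.
From mathcomp Require Import all_boot all_order all_algebra.
From mathcomp Require Import all_classical all_reals.
From mathcomp Require Import ereal.
Set Implicit Arguments. Unset Strict Implicit. Unset Printing Implicit Defensive.
Import Order.TTheory GRing.Theory Num.Theory.
Local Open Scope ring_scope.
Local Open Scope classical_set_scope.

(* Scalars: K (a num field, archimedean hypothesis in the theorem; covers R and C).
   Metric values: R : realType.  V : a K-vector space. *)

Section Defs.
Variables (R : realType) (K : numFieldType) (V : lmodType K).

Definition dconv (d : V -> V -> R) (x_ : nat -> V) (x : V) : Prop :=
  forall e : R, 0 < e -> exists N : nat, forall k, (N <= k)%N -> d (x_ k) x < e.

Definition Kconv (l_ : nat -> K) (l : K) : Prop :=
  forall e : K, 0 < e -> exists N : nat, forall k, (N <= k)%N -> `|l_ k - l| < e.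

Definition dcauchy (d : V -> V -> R) (x_ : nat -> V) : Prop :=
  forall e : R, 0 < e -> exists N : nat, forall m n, (N <= m)%N -> (N <= n)%N ->
    d (x_ m) (x_ n) < e.

Definition Fspace (d : V -> V -> R) : Prop :=
  (forall x y, d x y = 0 <-> x = y) /\
  (forall x y, d x y = d y x) /\
  (forall x y z, d x z <= d x y + d y z) /\
  (forall x y z, d (x + z) (y + z) = d x y) /\
  (forall x_ : nat -> V, dcauchy d x_ -> exists x, dconv d x_ x) /\
  (forall (x_ y_ : nat -> V) x y, dconv d x_ x -> dconv d y_ y ->
          dconv d (fun k => x_ k + y_ k) (x + y)) /\
  (forall (l_ : nat -> K) (x_ : nat -> V) l x, Kconv l_ l -> dconv d x_ x ->
          dconv d (fun k => l_ k *: x_ k) (l *: x)).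

Definition nondecreasing_metric (d : V -> V -> R) : Prop :=
  forall (a : K) (x : V), 0 <= a -> a <= 1 -> d (a *: x) 0 <= d x 0.

Definition approx_scheme (d : V -> V -> R) (A : nat -> set V) : Prop :=
  [/\ (forall n, A n `<=` A n.+1 /\ exists x, A n.+1 x /\ ~ A n x),
      (exists Kf : nat -> nat, forall n, (n <= Kf n)%N /\
          forall a b, A n a -> A n b -> A (Kf n) (a + b)),
      (forall n (l : K) a, A n a -> A n (l *: a))
    & (forall x (e : R), 0 < e -> exists n a, A n a /\ d x a < e)].

(* E(x, A) = inf_{a in A} d(x, a), in the extended reals (inf of empty = +oo) *)
Definition Edist (d : V -> V -> R) (x : V) (A : set V) : \bar R :=
  ereal_inf [set (d x a)%:E | a in A].

Definition Eset (d : V -> V -> R) (B A : set V) : \bar R :=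
  ereal_sup [set Edist d b A | b in B].

Definition cball (d : V -> V -> R) (x : V) (r : R) : set V := [set y | d x y <= r].

End Defs.

Definition decr_to0 (R : realType) (eps : nat -> R) : Prop :=
  [/\ (forall n, 0 <= eps n), (forall n, eps n.+1 <= eps n)
    & (forall e : R, 0 < e -> exists N : nat, forall n, (N <= n)%N -> eps n < e)].

(* (ii) => (i) by scaling: every x is (N+1) y with y in B(0, r0), and
   d((N+1) y, (N+1) a) <= (N+1) d(y, a), so C(x) = N+1 works.
   (i) => (ii) by Baire: the closed sets {z | E(z, A_n) <= m eps_n for all n}
   cover X, so one of them contains a ball B(y, s).  Writing x = (y + x) - y
   and using A_n - A_n in A_(K n) gives E(x, A_(K n)) <= 2 m eps_n on B(0, s);
   re-indexing eps along a slowly growing inverse of K yields a sequence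
   decreasing to 0 that bounds E(x, A_k) uniformly on B(0, s).
   For the Shapiro characterisation, E(B(0, r), A_n) is itself a non-increasing
   sequence bounded by r, so it tends to 0 iff (ii) holds on B(0, r). *)

From HB Require Import structures.
From mathcomp Require Import all_boot all_order all_algebra.
From mathcomp Require Import all_classical all_reals.
From mathcomp Require Import ereal ring lra.
Set Implicit Arguments. Unset Strict Implicit. Unset Printing Implicit Defensive.
Import Order.TTheory GRing.Theory Num.Theory.
Local Open Scope ring_scope.
Local Open Scope classical_set_scope.

Definition archi_field (K : numFieldType) := forall k : K, exists n : nat, `|k| < n%:R.

Section FspaceMetric.
Variables (R : realType) (K : numFieldType) (V : lmodType K) (d : V -> V -> R).
Hypothesis hF : Fspace d.

Lemma distxx x : d x x = 0.
Proof. by case: hF => deq _; apply/deq. Qed.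

Lemma distC x y : d x y = d y x.
Proof. by case: hF => _ [dsym _]; apply: dsym. Qed.

Lemma dist_triangle x y z : d x z <= d x y + d y z.
Proof. by case: hF => _ [_ [dtri _]]; apply: dtri. Qed.

Lemma distDr x y z : d (x + z) (y + z) = d x y.
Proof. by case: hF => _ [_ [_ [dtr _]]]; apply: dtr. Qed.

Lemma dist_complete x_ : dcauchy d x_ -> exists x, dconv d x_ x.
Proof. by case: hF => _ [_ [_ [_ [dcomp _]]]]; apply: dcomp. Qed.

Lemma dconv_scale (l_ : nat -> K) (x_ : nat -> V) l x :
  Kconv l_ l -> dconv d x_ x -> dconv d (fun k => l_ k *: x_ k) (l *: x).
Proof. by case: hF => _ [_ [_ [_ [_ [_ hs]]]]]; apply: hs. Qed.

Lemma dist_ge0 x y : 0 <= d x y.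
Proof.
by have := dist_triangle x y x; rewrite distxx (distC y x); lra.
Qed.

Lemma dist_mulrn v w k : d (v *+ k) (w *+ k) <= k%:R * d v w.
Proof.
elim: k => [|k IH]; first by rewrite !mulr0n distxx mul0r.
rewrite !mulrS; apply: le_trans (dist_triangle _ (w + v *+ k) _) _.
by rewrite distDr (addrC w) (addrC w) distDr mulrDl mul1r lerD2l.
Qed.

Lemma dist_subr x y a b : d x (a - b) <= d (y + x) a + d y b.
Proof.
apply: le_trans (dist_triangle _ (a - y) _) _; apply: lerD.
  by rewrite -(distDr x (a - y) y) subrK addrC.
rewrite -(distDr _ _ (- a)) (addrAC a (- y)) (addrAC a (- b)) subrr !add0r.
by rewrite -(distDr _ _ (y + b)) addKr (addrC y) addKr distC.
Qed.

Lemma shrinking_balls_cvg (c : nat -> V) (rho : nat -> R) :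
  (forall k, 0 < rho k) -> (forall k, rho k.+1 <= rho k / 2) ->
  (forall k, d (c k) (c k.+1) <= rho k / 2) ->
  exists y, forall k, d (c k) y <= rho k.
Proof.
move=> rho_gt0 rho_half c_step.
have ball_nested k m w : (k <= m)%N -> d (c m) w <= rho m -> d (c k) w <= rho k.
  move=> /subnK <-; elim: (m - k)%N => [//|j IH]; rewrite addSn => hw; apply: IH.
  apply: le_trans (dist_triangle _ (c (j + k).+1) _) _.
  by rewrite [rho _]splitr lerD ?c_step // (le_trans hw).
have centers_close k m : (k <= m)%N -> d (c k) (c m) <= rho k.
  by move=> km; apply: ball_nested km _; rewrite distxx ltW.
have rho_decay k : rho k * k.+1%:R <= rho 0.
  elim: k => [|k IH]; first by rewrite mulr1.
  apply: le_trans IH; apply: le_trans (ler_wpM2r (ler0n _ _) (rho_half k)) _.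
  rewrite -mulrA [_^-1 * _]mulrC ler_wpM2l ?(ltW (rho_gt0 k)) // ler_pdivrMr //.
  by rewrite -!natr1; have := ler0n R k; lra.
have [y hy] : exists y, dconv d c y.
  apply: dist_complete => e e0.
  pose N := Num.Def.archi_bound (2 * rho 0 / e).
  have hN : 2 * rho 0 / e < N%:R by apply: archi_boundP; rewrite divr_ge0 ?mulr_ge0 ?ltW.
  have rhoN : rho N < e / 2.
    rewrite -(ltr_pM2r (ltr0Sn R N)); apply: le_lt_trans (rho_decay N) _.
    rewrite ltr_pdivrMr // in hN.
    have -> : e / 2 * N.+1%:R = N%:R * e / 2 + e / 2 by rewrite -natr1; ring.
    have := rho_gt0 0; lra.
  exists N => m n Nm Nn; apply: le_lt_trans (dist_triangle _ (c N) _) _.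
  rewrite distC [e]splitr.
  apply: le_lt_trans (lerD (centers_close _ _ Nm) (centers_close _ _ Nn)) _.
  exact: ltrD.
exists y => k; apply/ler_addgt0Pr => e e0.
have [N hN] := hy e e0.
apply: le_trans (dist_triangle _ (c (maxn N k)) _) _; apply: lerD.
  by apply: centers_close; rewrite leq_maxr.
by apply/ltW/hN; rewrite leq_maxl.
Qed.

Lemma closed_nowhere_dense_avoid (P : V -> Prop) :
  (forall z, (forall r, 0 < r -> exists w, d z w <= r /\ P w) -> P z) ->
  ~ (exists y s, 0 < s /\ forall z, d y z <= s -> P z) ->
  forall y s, 0 < s -> exists z r, [/\ 0 < r, r <= s / 2, d y z <= s / 2 &
    forall w, d z w <= r -> ~ P w].
Proof.
move=> P_closed no_ball y s s0.
have [z [yz nPz]] : exists z, d y z <= s / 2 /\ ~ P z.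
  apply: contrapT => hn; apply: no_ball; exists y, (s / 2).
  split; first by rewrite divr_gt0.
  by move=> z yz; apply: contrapT => nPz; apply: hn; exists z.
have [r [r0 hr]] : exists r, 0 < r /\ forall w, d z w <= r -> ~ P w.
  apply: contrapT => hn; apply: nPz; apply: P_closed => r r0.
  apply: contrapT => hw; apply: hn; exists r; split => // w zw Pw.
  by apply: hw; exists w.
exists z, (Num.min r (s / 2)); split => //.
- by rewrite lt_min r0 divr_gt0.
- by rewrite ge_min lexx orbT.
- by move=> w; rewrite le_min => /andP[/hr].
Qed.

Lemma baire_category (G : nat -> V -> Prop) :
  (forall m z, (forall r, 0 < r -> exists w, d z w <= r /\ G m w) -> G m z) ->
  (forall z, exists m, G m z) ->
  exists m y s, 0 < s /\ forall z, d y z <= s -> G m z.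
Proof.
move=> G_closed G_cover; apply: contrapT => no_ball.
have step (t : nat * V * R) : exists zr : V * R, 0 < t.2 -> [/\ 0 < zr.2,
    zr.2 <= t.2 / 2, d t.1.2 zr.1 <= t.2 / 2 & forall w, d zr.1 w <= zr.2 -> ~ G t.1.1 w].
  case: t => [[m y] s] /=; have [s0|_] := ltP 0 s; last by exists (y, s).
  have no_ball_m : ~ (exists y s, 0 < s /\ forall z, d y z <= s -> G m z).
    by move=> [y' [s' hs']]; apply: no_ball; exists m, y', s'.
  have [z [r hzr]] := closed_nowhere_dense_avoid (G_closed m) no_ball_m y s0.
  by exists (z, r).
have [f hf] := choice step.
pose ball := fix ball k : V * R :=
  if k is k'.+1 then f (k', (ball k').1, (ball k').2) else (0, 1).
have ball_pos k : 0 < (ball k).2.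
  by elim: k => [|k IH] /=; [exact: ltr01 | case: (hf (k, (ball k).1, (ball k).2) IH)].
have ballS k := hf (k, (ball k).1, (ball k).2) (ball_pos k).
have [y hy] : exists y, forall k, d (ball k).1 y <= (ball k).2.
  by apply: shrinking_balls_cvg => // k; case: (ballS k).
have [m Gm] := G_cover y.
by case: (ballS m) => _ _ _ /(_ y (hy m.+1)).
Qed.

Lemma scale_inv_succ_near0 (Karchi : archi_field K) x r :
  0 < r -> exists N : nat, d 0 ((N.+1%:R : K)^-1 *: x) <= r.
Proof.
move=> r0; have inv_cvg : Kconv (fun k : nat => (k.+1%:R : K)^-1) 0.
  move=> e e0; have [N hN] := Karchi e^-1; exists N => k Nk.
  rewrite subr0 ger0_norm ?invr_ge0 ?ler0n // invf_plt ?posrE ?ltr0Sn //.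
  rewrite ger0_norm ?invr_ge0 ?ltW // in hN.
  by apply: lt_le_trans hN _; rewrite ler_nat; apply: leqW.
have cst : dconv d (fun _ => x) x by move=> e e0; exists 0%N => k _; rewrite distxx.
have [N hN] := dconv_scale inv_cvg cst r0.
by exists N; move: (hN N (leqnn N)); rewrite scale0r distC => /ltW.
Qed.

End FspaceMetric.

Section ApproxLe.
Variables (R : realType) (K : numFieldType) (V : lmodType K) (d : V -> V -> R).

Definition approx_le (x : V) (A : set V) (t : R) :=
  forall e, 0 < e -> exists2 a, A a & d x a < t + e.

Lemma Edist_leP x A t : (Edist d x A <= t%:E)%E <-> approx_le x A t.
Proof.
split=> [hE e e0|hA].
  have : (Edist d x A < (t + e)%:E)%E.
    by apply: le_lt_trans hE _; rewrite lte_fin ltrDl.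
  by move/ereal_inf_lt => [_ [a Aa <-]]; rewrite lte_fin; exists a.
apply/lee_addgt0Pr => e e0; apply: ge_ereal_inf.
have [a Aa hxa] := hA e e0; exists (d x a)%:E; first by exists a.
by rewrite -EFinD lee_fin ltW.
Qed.

Lemma approx_le_mono x (A B : set V) t s :
  approx_le x A t -> A `<=` B -> t <= s -> approx_le x B s.
Proof.
move=> hA AB ts e e0; have [a Aa hxa] := hA e e0; exists a; first exact: AB.
by apply: lt_le_trans hxa _; rewrite lerD2r.
Qed.

Lemma approx_le_mem0 x (A : set V) : A 0 -> approx_le x A (d x 0).
Proof. by move=> A0 e e0; exists 0; rewrite // ltrDl. Qed.

Hypothesis hF : Fspace d.

Lemma approx_le_closure z A t :
  (forall r, 0 < r -> exists w, d z w <= r /\ approx_le w A t) -> approx_le z A t.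
Proof.
move=> hz e e0; have e2 : 0 < e / 2 by rewrite divr_gt0.
have [w [zw hw]] := hz _ e2; have [a Aa hwa] := hw _ e2; exists a => //.
by apply: le_lt_trans (dist_triangle hF z w a) _; lra.
Qed.

Lemma approx_le_mulrn y (A : set V) t k :
  (forall (l : K) a, A a -> A (l *: a)) ->
  approx_le y A t -> approx_le (y *+ k.+1) A (k.+1%:R * t).
Proof.
move=> Ascale hy e e0.
have [a Aa hya] := hy (e / k.+1%:R) (divr_gt0 e0 (ltr0Sn _ _)).
exists (a *+ k.+1); first by rewrite -scaler_nat; apply: Ascale.
apply: le_lt_trans (dist_mulrn hF _ _ _) _.
move: hya; rewrite -(ltr_pM2l (ltr0Sn R k)) => /lt_le_trans; apply.
by rewrite mulrDr mulrCA mulfV ?mulr1 // pnatr_eq0.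
Qed.

Lemma approx_le_sub (A B : set V) x y t u :
  (forall a b, A a -> A b -> B (a - b)) ->
  approx_le (y + x) A t -> approx_le y A u -> approx_le x B (t + u).
Proof.
move=> AB hyx hy e e0; have e2 : 0 < e / 2 by rewrite divr_gt0.
have [a Aa ha] := hyx _ e2; have [b Ab hb] := hy _ e2.
exists (a - b); first exact: AB.
by apply: le_lt_trans (dist_subr hF x y a b) _; lra.
Qed.

End ApproxLe.

Section DecrTo0.
Variable R : realType.

Lemma decr_to0_le (eps : nat -> R) : decr_to0 eps ->
  forall i j, (i <= j)%N -> eps j <= eps i.
Proof.
case=> _ eps_decr _ i j /subnK <-; elim: (j - i)%N => [//|k IH].
by rewrite addSn; apply: le_trans (eps_decr _) IH.
Qed.

Lemma decr_to0_reindex (eps : nat -> R) (h : nat -> nat) (c M : R) :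
  decr_to0 eps -> {homo h : i j / (i <= j)%N} ->
  (forall N, exists k0, forall k, (k0 <= k)%N -> (N <= h k)%N) ->
  0 <= c -> c * eps 0 <= M ->
  decr_to0 (fun k => if h k == 0%N then M else c * eps (h k)).
Proof.
move=> heps h_homo h_oo c0 epsM; have [eps0 _ eps_lim] := heps.
have ceps_le i j : (i <= j)%N -> c * eps j <= c * eps i.
  by move=> ij; rewrite ler_wpM2l // decr_to0_le.
split.
- move=> k; case: ifP => _; last exact: mulr_ge0.
  exact: le_trans (mulr_ge0 c0 (eps0 0%N)) epsM.
- move=> k; have hkk : (h k <= h k.+1)%N by apply: h_homo.
  case: ifP => [/eqP hk1|_].
    by move: hkk; rewrite hk1 leqn0 => /eqP ->; rewrite eqxx.
  case: ifP => _; last exact: ceps_le.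
  exact: le_trans (ceps_le _ _ (leq0n _)) epsM.
- move=> e e0; have c1 : 0 < c + 1 by rewrite ltr_wpDl.
  have [N hN] := eps_lim _ (divr_gt0 e0 c1).
  have [k0 hk0] := h_oo (maxn N 1); exists k0 => k /hk0.
  rewrite geq_max => /andP[Nhk hk1]; rewrite (negbTE (lt0n_neq0 hk1)).
  have := hN _ Nhk; rewrite ltr_pdivlMr // => /(le_lt_trans _); apply.
  by rewrite mulrDr mulr1 (mulrC (eps _)) lerDl eps0.
Qed.

End DecrTo0.

Lemma exists_slow_inverse (Kf : nat -> nat) : exists h : nat -> nat,
  [/\ {homo h : i j / (i <= j)%N}, (forall k, h k = 0%N \/ (Kf (h k) <= k)%N)
    & (forall N, exists k0, forall k, (k0 <= k)%N -> (N <= h k)%N)].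
Proof.
pose h := fix h k := if k is k'.+1 then
  (if (Kf (h k').+1 <= k)%N then (h k').+1 else h k') else 0%N.
have hS k : h k.+1 = if (Kf (h k).+1 <= k.+1)%N then (h k).+1 else h k by [].
have h_step k : (h k <= h k.+1)%N by rewrite hS; case: ifP.
have h_homo : {homo h : i j / (i <= j)%N}.
  by apply: homo_leq => //; exact: leq_trans.
exists h; split => //.
  elim=> [|k IH]; first by left.
  rewrite hS; case: ifP => [|_]; first by right.
  by case: IH => [->|hk]; [left | right; apply: leqW].
elim=> [|N [k0 IH]]; first by exists 0%N.
pose k1 := maxn k0 (Kf N.+1).
have [hk1|hk1] := leqP N.+1 (h k1); first by exists k1 => k /h_homo; apply: leq_trans.
have hk1N : h k1 = N by apply/eqP; rewrite eqn_leq -ltnS hk1 IH // leq_maxl.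
exists k1.+1 => k /h_homo; apply: leq_trans.
by rewrite hS hk1N ifT // leqW // leq_maxr.
Qed.

Section ApproximationScheme.
Variables (R : realType) (K : numFieldType) (V : lmodType K).
Variables (d : V -> V -> R) (A : nat -> set V).
Hypotheses (hF : Fspace d) (hA : approx_scheme d A).

Lemma approx_scheme_nested n k : (n <= k)%N -> A n `<=` A k.
Proof.
have [Anest _ _ _] := hA; move=> /subnK <-.
by elim: (k - n)%N => [//|j IH] x /IH; rewrite addSn; apply: (Anest _).1.
Qed.

Lemma approx_scheme_scale n (l : K) a : A n a -> A n (l *: a).
Proof. by case: hA => _ _ Ascale _; apply: Ascale. Qed.

Lemma approx_scheme_sub : exists Kf : nat -> nat,
  forall n a b, A n a -> A n b -> A (Kf n) (a - b).
Proof.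
case: hA => _ [Kf hKf] _ _; exists Kf => n a b Aa Ab.
by apply: (hKf n).2 => //; rewrite -scaleN1r; apply: approx_scheme_scale.
Qed.

Lemma approx_scheme_mem0 n : A 0%N !=set0 -> A n 0.
Proof.
case=> a Aa; apply: (approx_scheme_nested (leq0n n)).
by rewrite -(scale0r a); apply: approx_scheme_scale.
Qed.

Lemma approx_le_on_some_ball (eps : nat -> R) : (forall n, 0 <= eps n) ->
  (forall x, exists C : R, 0 < C /\ forall n, approx_le d x (A n) (C * eps n)) ->
  exists (m : nat) y s, 0 < s /\
    forall z, d y z <= s -> forall n, approx_le d z (A n) (m%:R * eps n).
Proof.
move=> eps0 hC.
pose G m z := forall n, approx_le d z (A n) (m%:R * eps n).
apply: (baire_category hF (G := G)) => [m z hz n|z].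
  apply: (approx_le_closure hF) => r r0; have [w [zw hw]] := hz r r0.
  by exists w; split; last exact: hw.
have [C [C0 hCz]] := hC z; exists (Num.Def.archi_bound C) => n.
apply: approx_le_mono (hCz n) _ _ => //.
by rewrite ler_wpM2r // ltW // archi_boundP // ltW.
Qed.

Lemma approx_le_on_ball0 (eps : nat -> R) : decr_to0 eps ->
  (forall x, exists C : R, 0 < C /\ forall n, approx_le d x (A n) (C * eps n)) ->
  exists r0 : R, 0 < r0 /\ exists eps' : nat -> R, decr_to0 eps' /\
    forall n x, cball d 0 r0 x -> approx_le d x (A n) (eps' n).
Proof.
move=> heps hC; have [eps0 _ _] := heps.
have [m [y [s [s0 hs]]]] := approx_le_on_some_ball eps0 hC.
have A0 n : A n 0.
  apply: approx_scheme_mem0; have [C [_ /(_ 0%N 1 ltr01) [a Aa _]]] := hC 0.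
  by exists a.
pose c : R := m%:R + m%:R.
have [Kf hKf] := approx_scheme_sub.
(* x = (y + x) - y, with y + x and y both in B(y, s). *)
have near0 x n : d 0 x <= s -> approx_le d x (A (Kf n)) (c * eps n).
  move=> hx; rewrite mulrDl; apply: (approx_le_sub hF (hKf n) (y := y)).
    by apply: hs; rewrite -{1}(add0r y) (addrC y x) (distDr hF).
  by apply: hs; rewrite (distxx hF) ltW.
have [h [h_homo h_inv h_oo]] := exists_slow_inverse Kf.
have c0 : 0 <= c by rewrite addr_ge0.
exists s; split => //.
(* While h k = 0 only the trivial bound d(x, 0) <= s is available. *)
exists (fun k => if h k == 0%N then s + c * eps 0%N else c * eps (h k)); split.
  by apply: decr_to0_reindex => //; rewrite lerDr ltW.
move=> k x hx; case: ifP => [_|/negbT hk].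
  apply: (approx_le_mono (approx_le_mem0 d x (A0 k))) => //.
  by rewrite (distC hF) ler_wpDr // mulr_ge0.
case: (h_inv k) => [hk0|hKk]; first by rewrite hk0 in hk.
exact: approx_le_mono (near0 x (h k) hx) (approx_scheme_nested hKk) _.
Qed.

Lemma approx_le_of_ball0 (Karchi : archi_field K) (r0 : R) (eps : nat -> R) :
  0 < r0 ->
  (forall n x, cball d 0 r0 x -> approx_le d x (A n) (eps n)) ->
  forall x, exists C : R, 0 < C /\ forall n, approx_le d x (A n) (C * eps n).
Proof.
move=> r00 hball x; have [N hN] := scale_inv_succ_near0 hF Karchi x r00.
exists N.+1%:R; split => // n.
have -> : x = ((N.+1%:R : K)^-1 *: x) *+ N.+1.
  by rewrite -scaler_nat scalerA mulfV ?scale1r // pnatr_eq0.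
by apply: (approx_le_mulrn hF) => [l a|]; [exact: approx_scheme_scale | exact: hball].
Qed.

End ApproximationScheme.

Section Shapiro.
Variables (R : realType) (K : numFieldType) (V : lmodType K).
Variables (d : V -> V -> R) (A : nat -> set V).

Definition fails_Shapiro := exists eps : nat -> R, decr_to0 eps /\
  forall x : V, exists C : R, 0 < C /\
    forall n, (Edist d x (A n) <= (C * eps n)%:E)%E.

Definition fails_Shapiro_on_ball (r : R) := exists eps : nat -> R, decr_to0 eps /\
  forall n x, cball d 0 r x -> (Edist d x (A n) <= (eps n)%:E)%E.

Definition satisfies_Shapiro := forall eps : nat -> R, decr_to0 eps ->
  exists x : V, ~ (exists C : R, 0 < C /\
    forall n, (Edist d x (A n) <= (C * eps n)%:E)%E).

Definition Eball_inf (r : R) : \bar R :=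
  ereal_inf (range (fun n => Eset d (cball d 0 r) (A n))).

Hypotheses (hF : Fspace d) (hA : approx_scheme d A).

Lemma fails_Shapiro_iff_on_ball (Karchi : archi_field K) :
  fails_Shapiro <-> exists r0, 0 < r0 /\ fails_Shapiro_on_ball r0.
Proof.
split=> [[eps [heps hC]]|[r0 [r00 [eps [heps hball]]]]].
  have hC' x : exists C, 0 < C /\ forall n, approx_le d x (A n) (C * eps n).
    by have [C [C0 hCx]] := hC x; exists C; split => // n; apply/Edist_leP.
  have [r0 [r00 [eps' [heps' hball]]]] := approx_le_on_ball0 hF hA heps hC'.
  by exists r0; split => //; exists eps'; split => // n x /hball/Edist_leP.
exists eps; split => // x.
have hball' n x' : cball d 0 r0 x' -> approx_le d x' (A n) (eps n).
  by move/hball/Edist_leP.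
have [C [C0 hCx]] := approx_le_of_ball0 hF hA Karchi r00 hball' x.
by exists C; split => // n; apply/Edist_leP.
Qed.

Hypothesis A0 : A 0%N !=set0.

Lemma Eset_ball_ge0 r n : 0 <= r -> (0 <= Eset d (cball d 0 r) (A n))%E.
Proof.
move=> r0; apply: le_trans (ereal_sup_ubound _) => /=; last first.
  by exists 0 => //; rewrite /cball /= (distxx hF).
by apply: le_ereal_inf_tmp => _ [a _ <-]; rewrite lee_fin (dist_ge0 hF).
Qed.

Lemma Eset_ball_le r n : (Eset d (cball d 0 r) (A n) <= r%:E)%E.
Proof.
apply: ge_ereal_sup => _ [b bb <-]; apply: ge_ereal_inf.
exists (d b 0)%:E; first by exists 0 => //; exact: (approx_scheme_mem0 hA n A0).
by rewrite lee_fin (distC hF).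
Qed.

Lemma Eset_ball_antitone r n k :
  (n <= k)%N -> (Eset d (cball d 0 r) (A k) <= Eset d (cball d 0 r) (A n))%E.
Proof.
move=> nk; apply: ge_ereal_sup => _ [b bb <-].
apply: le_trans (ereal_sup_ubound _); last by exists b.
apply: le_ereal_inf_tmp => _ [a Aa <-].
by apply: ereal_inf_lbound; exists a => //; apply: (approx_scheme_nested hA nk).
Qed.

Lemma fails_Shapiro_on_ballP r : 0 < r ->
  fails_Shapiro_on_ball r <-> (Eball_inf r <= 0)%E.
Proof.
move=> r0; split=> [[eps [[_ _ eps_lim] hball]]|hinf].
  apply/lee_addgt0Pr => e e0; rewrite add0e.
  have [N hN] := eps_lim e e0.
  apply: le_trans (ereal_inf_lbound _) _; first by exists N.
  apply: ge_ereal_sup => _ [b bb <-]; apply: le_trans (hball N b bb) _.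
  by rewrite lee_fin ltW // hN.
pose eps n := fine (Eset d (cball d 0 r) (A n)).
have epsE n : (eps n)%:E = Eset d (cball d 0 r) (A n).
  rewrite fineK // ge0_fin_numE ?Eset_ball_ge0 ?ltW //.
  exact: le_lt_trans (Eset_ball_le r n) (ltry _).
exists eps; split; last first.
  by move=> n x bx; rewrite epsE; apply: ereal_sup_ubound; exists x.
split.
- by move=> n; rewrite -lee_fin epsE Eset_ball_ge0 ?ltW.
- by move=> n; rewrite -lee_fin !epsE Eset_ball_antitone.
- move=> e e0; have : (Eball_inf r < e%:E)%E by apply: le_lt_trans hinf _.
  move/ereal_inf_lt => [_ [n _ <-]] hn; exists n => k nk.
  by rewrite -lte_fin epsE; apply: le_lt_trans (Eset_ball_antitone r nk) hn.
Qed.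

Lemma satisfies_ShapiroP (Karchi : archi_field K) :
  satisfies_Shapiro <-> forall r, 0 < r -> (0 < Eball_inf r)%E.
Proof.
split=> [hS r r0|hpos eps heps].
  rewrite ltNge; apply/negP => /(fails_Shapiro_on_ballP r0) hball.
  have [eps [heps hC]] : fails_Shapiro.
    by apply/(fails_Shapiro_iff_on_ball Karchi); exists r.
  by have [x hx] := hS eps heps; apply: hx.
apply: contrapT => no_x.
have hfail : fails_Shapiro.
  by exists eps; split => // x; apply: contrapT => hx; apply: no_x; exists x.
have [r0 [r00]] := (fails_Shapiro_iff_on_ball Karchi).1 hfail.
by move/(fails_Shapiro_on_ballP r00); rewrite leNgt hpos.
Qed.

End Shapiro.

Unset Implicit Arguments.

Theorem mainTheorem2 (R : realType) (K : numFieldType) (V : lmodType K)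
  (d : V -> V -> R) (A : nat -> set V)
  (Karchi : forall k : K, exists n : nat, `|k| < n%:R)
  (hF : Fspace d) (hnd : nondecreasing_metric d) (hA : approx_scheme d A) :
  ((exists eps : nat -> R, decr_to0 eps /\
      forall x : V, exists C : R, 0 < C /\
        forall n, (Edist d x (A n) <= (C * eps n)%:E)%E)
   <->
   (exists r0 : R, 0 < r0 /\ exists eps : nat -> R, decr_to0 eps /\
      forall n x, cball d 0 r0 x -> (Edist d x (A n) <= (eps n)%:E)%E))
  /\
  (A 0%N !=set0 ->
   ((forall eps : nat -> R, decr_to0 eps -> exists x : V,
       ~ (exists C : R, 0 < C /\ forall n, (Edist d x (A n) <= (C * eps n)%:E)%E))
    <->
    (forall r : R, 0 < r ->
       (0 < ereal_inf (range (fun n => Eset d (cball d 0 r) (A n))))%E))).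
Proof.
split; first exact: fails_Shapiro_iff_on_ball.
by move=> A0; apply: satisfies_ShapiroP.
Qed.
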